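(* Let $n\ge 2$, $q\ge 2$ be integers and let $S\subseteq\bigcup_{i=2}^n\mathbb{Z}_q^i$ be a $q$-ary (variable-length) non-overlapping code with all codeword lengths at most $n$. Let $C(n,q)$ denote the maximum size of a fixed-length $q$-ary non-overlapping code $S'\subseteq\mathbb{Z}_q^n$. Then $|S|\le C(n,q)$.
   Context: $\mathbb{Z}_q=\{0,1,\dots,q-1\}$; words are finite strings over $\mathbb{Z}_q$, $|\mathbf{s}|$ denotes the length of $\mathbf{s}$. For $\mathbf{s}=(s_1,\dots,s_m)$, $\mathrm{pre}(\mathbf{s})=\{(s_1,\dots,s_k):1\le k\le m-1\}$ and $\mathrm{suf}(\mathbf{s})=\{(s_{m-k+1},\dots,s_m):1\le k\le m-1\}$ are the sets of nontrivial prefixes and suffixes. A code $S\subseteq\bigcup_{i=2}^n\mathbb{Z}_q^i$ is non-overlapping if (1) for all $\mathbf{u},\mathbf{v}\in S$ (possibly equal), $\mathrm{pre}(\mathbf{u})\cap\mathrm{suf}(\mathbf{v})=\emptyset$, and (2) for all distinct $\mathbf{u},\mathbf{v}\in S$ with $|\mathbf{u}|\le|\mathbf{v}|$, $\mathbf{u}$ is not a (contiguous) subword of $\mathbf{v}$. A fixed-length code of length $n$ is a subset of $\mathbb{Z}_q^n$ (for it condition (2) is automatic). *)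

From mathcomp Require Import all_boot.
Set Implicit Arguments. Unset Strict Implicit. Unset Printing Implicit Defensive.

Definition pre {T : Type} (s : seq T) : seq (seq T) :=
  [seq take k s | k <- iota 1 (size s).-1].
Definition suf {T : Type} (s : seq T) : seq (seq T) :=
  [seq drop (size s - k) s | k <- iota 1 (size s).-1].

Definition non_overlapping {T : eqType} (S : seq (seq T)) : bool :=
  all (fun u => all (fun v =>
    all (fun w => w \notin suf v) (pre u) &&
    ((u != v) ==> (size u <= size v) ==> ~~ infix u v)) S) S.

Definition Cnq (n q : nat) : nat :=
  \max_(A : {set n.-tuple 'I_q} |
          non_overlapping [seq val x | x in A]) #|A|.

From mathcomp Require Import all_boot zify.

Set Implicit Arguments. Unset Strict Implicit. Unset Printing Implicit Defensive.

(* Let U be a shortest codeword, shorter than n, and a its last letter.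
   Replacing U by U a keeps the code non-overlapping: an overlap in the new
   code would give a proper suffix of U that is a prefix of a codeword, a
   codeword starting with the last letter a of U, or a longer codeword having
   U as a suffix, none of which exists in the old code.  Iterating lengthens
   every codeword to exactly n without changing the number of codewords, which
   yields a fixed-length non-overlapping code of length n and the same size. *)

Section NonOverlapping.
Variable T : eqType.
Implicit Types s w u v x y z : seq T.
Implicit Types S : seq (seq T).

Lemma mem_pre w s :
  (w \in pre s) = [&& prefix w s, 0 < size w & size w < size s].
Proof.
apply/idP/idP.
- case/mapP => k; rewrite mem_iota => /andP[k1 k2] ->.
  rewrite prefix_take size_take.
  by case: (ltnP k (size s)) => h; [rewrite k1 h | lia].
- case/and3P => hp h0 h1; move: (hp); rewrite prefixE => /eqP e.
  by apply/mapP; exists (size w); [rewrite mem_iota; lia | rewrite e].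
Qed.

Lemma mem_suf w s :
  (w \in suf s) = [&& suffix w s, 0 < size w & size w < size s].
Proof.
apply/idP/idP.
- case/mapP => k; rewrite mem_iota => /andP[k1 k2] ->.
  rewrite suffix_drop size_drop; apply/andP; split; lia.
- case/and3P => hs h0 h1; move: (hs); rewrite suffixE => /eqP e.
  by apply/mapP; exists (size w); [rewrite mem_iota; lia | rewrite e].
Qed.

Definition overlap_free S : Prop :=
  forall u v w, u \in S -> v \in S -> 0 < size w -> size w < size u ->
    size w < size v -> prefix w u -> suffix w v -> False.

Definition infix_free S : Prop :=
  forall u v, u \in S -> v \in S -> u != v -> size u <= size v ->
    infix u v -> False.

Lemma non_overlappingP S :
  non_overlapping S <-> overlap_free S /\ infix_free S.
Proof.
split.
- move=> /allP noS; split.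
  + move=> u v w uS vS h0 h1 h2 hp hs.
    have /andP[/allP pre_suf _] := allP (noS u uS) v vS.
    by have := pre_suf w; rewrite mem_pre mem_suf hp hs h0 h1 h2 => /(_ isT).
  + move=> u v uS vS uv le hi.
    have /andP[_] := allP (noS u uS) v vS.
    by rewrite uv le hi.
- case=> ovS infS; apply/allP => u uS; apply/allP => v vS; apply/andP; split.
  + apply/allP => w; rewrite mem_pre mem_suf => /and3P[hp h0 h1].
    by apply/negP => /and3P[hs _ h2]; apply: (ovS u v w).
  + by apply/implyP => uv; apply/implyP => le; apply/negP; apply: (infS u v).
Qed.

Lemma non_overlapping_eq_mem S1 S2 :
  S1 =i S2 -> non_overlapping S1 = non_overlapping S2.
Proof.
move=> eS; suff imp S S' : S =i S' -> non_overlapping S -> non_overlapping S'.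
  by apply/idP/idP; apply: imp => // x; rewrite eS.
move=> e /non_overlappingP[ovS infS]; apply/non_overlappingP; split.
- by move=> u v w; rewrite -!e; apply: ovS.
- by move=> u v; rewrite -!e; apply: infS.
Qed.

Lemma size_infix x y : infix x y -> size x <= size y.
Proof. by case/infixP => s [s' ->]; rewrite !size_cat; lia. Qed.

Lemma prefix_rcons_le z u a :
  prefix z (rcons u a) -> size z <= size u -> prefix z u.
Proof. by move=> + le; rewrite !prefixE -cats1 takel_cat. Qed.

Lemma suffix_rcons_inv z u a : suffix z (rcons u a) -> 0 < size z ->
  exists2 z', z = rcons z' a & suffix z' u.
Proof.
case/lastP: z => [//|z' b]; rewrite suffix_rcons => /andP[/eqP -> h] _.
by exists z'.
Qed.

Section LengthenShortest.
Variables (S : seq (seq T)) (u : seq T) (a : T).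
Let U := rcons u a.
Let w := rcons U a.
Let S' := w :: rem U S.

Hypotheses (uniqS : uniq S) (ovS : overlap_free S) (infS : infix_free S).
Hypotheses (size_ge2 : forall s, s \in S -> 2 <= size s) (US : U \in S).
Hypothesis (U_shortest : forall v, v \in S -> size U <= size v).

Lemma size_lengthened : size w = (size U).+1.
Proof. exact: size_rcons. Qed.

Lemma mem_lengthened x : x \in S' -> x = w \/ (x \in S /\ x != U).
Proof.
rewrite in_cons (mem_rem_uniq _ uniqS) inE.
by case/orP => [/eqP ->|/andP[xU xS]]; [left | right].
Qed.

Lemma letter_overlap_free x y c :
  x \in S -> y \in S -> prefix [:: c] x -> suffix [:: c] y -> False.
Proof.
move=> xS yS hp hs; apply: (ovS xS yS) hp hs => //.
- by have := size_ge2 xS.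
- by have := size_ge2 yS.
Qed.

Lemma prefix_lengthened x z : x \in S' -> prefix z x ->
  size z < size x -> size z < size w ->
  exists2 y, y \in S /\ prefix z y & size z < size y \/ (y = U /\ z = U).
Proof.
case/mem_lengthened => [->|[xS _]] hp zx zw; last by exists x => //; left.
have zU : size z <= size U by rewrite size_lengthened in zw.
have hpU : prefix z U := prefix_rcons_le hp zU.
exists U => //; case: (ltnP (size z) (size U)) => Uz; [by left | right].
split=> //; move: hpU; rewrite prefixE.
have -> : size z = size U by apply/eqP; rewrite eqn_leq zU Uz.
by rewrite take_size => /eqP.
Qed.

Lemma prefix_not_suffix_lengthened y z : y \in S -> prefix z y ->
  size z <= size y -> 0 < size z -> size z < size w -> ~ suffix z w.
Proof.
move=> yS hp zy z0 zw hs.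
have [z' ez hs'] := suffix_rcons_inv hs z0.
subst z; rewrite size_rcons in zy zw z0.
case: z' hp hs' zy zw {hs z0} => [|c z'] hp hs' zy zw.
- (* the letter [a] would start [y] and end [U] *)
  apply: (letter_overlap_free yS US hp).
  by rewrite /U -cats1 suffix_suffix.
- apply: (ovS yS US (w := c :: z')) hs' => //.
  + by rewrite size_lengthened in zw.
  + exact: prefix_trans (prefix_rcons _ _) hp.
Qed.

Lemma overlap_free_lengthened : overlap_free S'.
Proof.
move=> x v z xS' vS' z0 zx zv hp hs.
have : size z < size w \/ (x \in S /\ v \in S).
  case/mem_lengthened: (xS') zx => [-> zx|[xS _] _]; first by left.
  by case/mem_lengthened: (vS') zv => [-> zv|[vS _] _]; [left | right].
case=> [zw|[xS vS]]; last exact: (ovS xS vS z0 zx zv hp hs).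
have [y [yS hpy] zy] := prefix_lengthened xS' hp zx zw.
have zy' : size z <= size y by case: zy => [/ltnW|[-> ->]].
case/mem_lengthened: vS' zv hs => [-> _ hs|[vS vU] zv hs].
  exact: (prefix_not_suffix_lengthened yS hpy zy' z0 zw hs).
case: zy => [zy|[ey ez]]; first exact: (ovS yS vS z0 zy zv hpy hs).
subst y z; apply: (infS US vS _ (ltnW zv)); first by rewrite eq_sym.
exact: suffixW.
Qed.

Lemma infix_free_lengthened : infix_free S'.
Proof.
move=> x y xS' yS' xy le hi.
case/mem_lengthened: xS' xy le hi => [->|[xS xU]] xy le hi.
  case/mem_lengthened: yS' xy le hi => [->|[yS yU]] xy le hi.
    by rewrite eqxx in xy.
  apply: (infS US yS _ _ (infix_trans (infix_rcons _ _) hi)).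
    by rewrite eq_sym.
  by apply: leq_trans le; rewrite size_lengthened.
case/mem_lengthened: yS' xy le hi => [->|[yS _]] xy le hi; last first.
  exact: (infS xS yS).
move: hi; rewrite /w infix_rconsl => /orP[hs|hi]; last first.
  exact: (infS xS US xU (size_infix hi) hi).
(* [x] is a suffix of [U a] other than [U a] and not shorter than [U] *)
have xU' : size x = size U.
  have {}le : size x <= (size U).+1 by rewrite -size_lengthened.
  apply/eqP; rewrite eqn_leq U_shortest // andbT -ltnS ltn_neqAle le andbT.
  apply: contraNneq xy => xw; move: hs.
  by rewrite suffixE size_rcons xw subnn drop0 => /eqP <-.
have x2 := size_ge2 xS.
have [x' ex hs'] := suffix_rcons_inv hs (ltnW x2).
move: x2 xU'; rewrite ex size_rcons => x2 xU'.
apply: (ovS xS US (w := x')) hs' => //.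
- by rewrite ex size_rcons.
- by rewrite -xU'.
- by rewrite ex; apply: prefix_rcons.
Qed.

Lemma uniq_lengthened : uniq S'.
Proof.
rewrite /S' cons_uniq rem_uniq // andbT (mem_rem_uniq _ uniqS) inE.
apply/negP => /andP[wU wS].
apply: (infS US wS _ _ (infix_rcons _ _)); first by rewrite eq_sym.
by rewrite size_lengthened.
Qed.

End LengthenShortest.

Definition length_deficit (n : nat) S := \sum_(s <- S) (n - size s).

Lemma lengthen_step n S : uniq S -> overlap_free S -> infix_free S ->
  (forall s, s \in S -> 2 <= size s <= n) -> ~~ all (fun s => size s == n) S ->
  exists S', [/\ uniq S', overlap_free S' /\ infix_free S',
    forall s, s \in S' -> 2 <= size s <= n,
    size S' = size S & length_deficit n S' < length_deficit n S].
Proof.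
move=> uniqS ovS infS sizeS /allPn[s0 s0S s0n].
have exm : exists m, has (fun s => size s == m) S.
  by exists (size s0); apply/hasP; exists s0.
have [m /hasP[U US /eqP Um] minm] := find_ex_minn exm.
have U_shortest v : v \in S -> size U <= size v.
  by move=> vS; rewrite Um; apply: minm; apply/hasP; exists v.
have /andP[U2 Un] := sizeS U US.
have {}Un : size U < n.
  by have := sizeS s0 s0S; have := U_shortest s0 s0S; move: s0n Un; lia.
case/lastP: U US U_shortest U2 Un {Um} => [//|u a] US U_shortest U2 Un.
have size_ge2 s : s \in S -> 2 <= size s by case/sizeS/andP.
exists (rcons (rcons u a) a :: rem (rcons u a) S); split.
- exact: uniq_lengthened.
- split; [exact: overlap_free_lengthened | exact: infix_free_lengthened].
- move=> s; rewrite in_cons => /orP[/eqP ->|/mem_rem]; last exact: sizeS.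
  by rewrite size_rcons; lia.
- rewrite /= size_rem // prednK // -has_predT.
  by apply/hasP; exists (rcons u a).
- rewrite /length_deficit (perm_big _ (perm_to_rem US)) !big_cons ltn_add2r.
  by move: Un; rewrite !size_rcons; lia.
Qed.

Lemma lengthen_to_fixed_length n S : uniq S -> overlap_free S -> infix_free S ->
  (forall s, s \in S -> 2 <= size s <= n) ->
  exists S', [/\ uniq S', non_overlapping S', size S' = size S &
    forall s, s \in S' -> size s = n].
Proof.
have [k] := ubnP (length_deficit n S); elim: k S => // k IH S defS.
move=> uniqS ovS infS sizeS.
case: (boolP (all (fun s => size s == n) S)) => [/allP alln | notn].
  exists S; split=> //; first exact/non_overlappingP.
  by move=> s /alln /eqP.
have [S1 [uniqS1 [ovS1 infS1] sizeS1 eS1 defS1]] :=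
  lengthen_step uniqS ovS infS sizeS notn.
have [|S2 [? ? eS2 ?]] := IH S1 _ uniqS1 ovS1 infS1 sizeS1.
  exact: leq_trans defS1 _.
by exists S2; rewrite eS2 eS1.
Qed.

End NonOverlapping.

Lemma fixed_length_code_le_Cnq n q (S : seq (seq 'I_q)) :
  uniq S -> non_overlapping S -> (forall s, s \in S -> size s = n) ->
  size S <= Cnq n q.
Proof.
move=> uniqS noS sizeS.
pose A := [set t in pmap (insub : seq 'I_q -> option (n.-tuple 'I_q)) S].
have cardA : #|A| = size S.
  rewrite cardsE; move/card_uniqP: (pmap_sub_uniq (n.-tuple 'I_q) uniqS) => ->.
  rewrite size_pmap_sub -[RHS]count_predT.
  by apply: eq_in_count => s /sizeS ->; rewrite eqxx.
have memA : [seq val x | x in A] =i S.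
  move=> y; apply/imageP/idP => [[t]|yS].
    by rewrite inE mem_pmap_sub => ht ->.
  have yn : size y == n by rewrite sizeS.
  by exists (Tuple yn); rewrite // inE mem_pmap_sub.
rewrite -cardA; apply: leq_bigmax_cond.
by rewrite (non_overlapping_eq_mem memA).
Qed.

Theorem mainTheorem3 (n q : nat) (S : seq (seq 'I_q)) :
  2 <= n -> 2 <= q -> uniq S ->
  (forall s, s \in S -> 2 <= size s <= n) ->
  non_overlapping S ->
  size S <= Cnq n q.
Proof.
move=> _ _ uniqS sizeS /non_overlappingP[ovS infS].
have [S' [uniqS' noS' <- sizeS']] :=
  lengthen_to_fixed_length uniqS ovS infS sizeS.
exact: fixed_length_code_le_Cnq.
Qed.
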